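(* Let $p$ be a prime and let $G$ be a non-abelian, non-metacyclic group of order $p^3$. Then there exist at least $p+1$ pairwise non-isomorphic local nearrings whose additive group is isomorphic to $G$.
   Context: A (left) nearring is a set $R$ with two binary operations $+$ and $\cdot$ such that $(R,+)$ is a group (not necessarily abelian) with neutral element $0$, $(R,\cdot)$ is a semigroup, and $x\cdot(y+z)=x\cdot y+x\cdot z$ for all $x,y,z\in R$. A nearring with identity is one where $(R,\cdot)$ is a monoid. A nearring $R$ with identity is called local if the set $L$ of all non-invertible elements of $(R,\cdot)$ is a subgroup of $(R,+)$. The additive group of $R$ is $(R,+)$. Two nearrings are isomorphic if there is a bijection preserving both operations. *)

From mathcomp Require Import all_boot all_fingroup all_solvable.

Record nearring := NearRing {
  nr_car :> Type;
  nr_add : nr_car -> nr_car -> nr_car;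
  nr_zero : nr_car;
  nr_opp : nr_car -> nr_car;
  nr_mul : nr_car -> nr_car -> nr_car
}.

Set Implicit Arguments. Unset Strict Implicit. Unset Printing Implicit Defensive.

Definition is_nearring (R : nearring) : Prop :=
  let add := nr_add R in let mul := nr_mul R in
  let z := nr_zero R in let opp := nr_opp R in
  [/\ (forall x y w : R, add x (add y w) = add (add x y) w),
      (forall x : R, add z x = x /\ add x z = x),
      (forall x : R, add (opp x) x = z /\ add x (opp x) = z),
      (forall x y w : R, mul x (mul y w) = mul (mul x y) w)
    & (forall x y w : R, mul x (add y w) = add (mul x y) (mul x w))].

Definition nr_is_one (R : nearring) (e : R) : Prop :=
  forall x : R, nr_mul R e x = x /\ nr_mul R x e = x.

Definition nr_invertible (R : nearring) (e x : R) : Prop :=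
  exists y : R, nr_mul R x y = e /\ nr_mul R y x = e.

Definition nr_add_subgroup (R : nearring) (S : R -> Prop) : Prop :=
  [/\ S (nr_zero R),
      (forall x y, S x -> S y -> S (nr_add R x y))
    & (forall x, S x -> S (nr_opp R x))].

Definition local_nearring (R : nearring) : Prop :=
  is_nearring R /\
  exists e : R, nr_is_one e /\
    nr_add_subgroup (fun x : R => ~ nr_invertible e x).

Definition nr_isomorphic (R S : nearring) : Prop :=
  exists f : R -> S, bijective f /\
    (forall x y : R, f (nr_add R x y) = nr_add S (f x) (f y)) /\
    (forall x y : R, f (nr_mul R x y) = nr_mul S (f x) (f y)).

Definition additive_group_isomorphic (R : nearring) (gT : finGroupType) : Prop :=
  exists f : R -> gT, bijective f /\
    (forall x y : R, f (nr_add R x y) = (f x * f y)%g).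

(* The additive group of every nearring below is the Heisenberg group over
   'F_p, on triples with (a, b, c) + (a', b', c') = (a + a', b + b', c + c' + a b').
   A non-abelian, non-metacyclic group of order p^3 has exponent p (an element
   of order p^2 would generate a normal cyclic subgroup with cyclic quotient),
   so p is odd and (a, b, c) |-> y^b x^a [x, y]^c is an isomorphism for any
   non-commuting x, y.

   The multiplications [hmul k t] make this group a local nearring when t = 0 or
   k = 2, the units being the triples with a != 0; we take (k, t) = (i, 0) for
   i < p and (2, 1). An isomorphism between two of them fixes the scalars
   (u, 0, 0) = u * 1 and multiplies the centre by a constant, which forces
   u^(k+1) = u^(k'+1) for all u; with zero-symmetry (0 x = 0 iff k > 0) this
   gives k = k'. Finally t = 0 iff some non-central w has all its left
   multiples y w in the cyclic subgroup generated by w. *)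

From mathcomp Require Import all_boot all_fingroup all_solvable all_algebra.
From mathcomp Require Import ring.
Set Implicit Arguments. Unset Strict Implicit. Unset Printing Implicit Defensive.
Import GRing.Theory.

Section HeisenbergGroup.
Variable F : fieldType.
Local Open Scope ring_scope.

Definition heis := (F * F * F)%type.

Definition hadd (u v : heis) : heis :=
  (u.1.1 + v.1.1, u.1.2 + v.1.2, u.2 + v.2 + u.1.1 * v.1.2).
Definition hzero : heis := (0, 0, 0).
Definition hopp (u : heis) : heis := (- u.1.1, - u.1.2, - u.2 + u.1.1 * u.1.2).

Fixpoint hmuln (x : heis) (n : nat) : heis :=
  if n is m.+1 then hadd (hmuln x m) x else hzero.

Definition hcentral (z : heis) := forall v, hadd z v = hadd v z.

Lemma haddA : associative hadd.
Proof.
move=> [[a b] c] [[a1 b1] c1] [[a2 b2] c2]; rewrite /hadd /=; congr (_, _, _); ring.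
Qed.

Lemma hadd0l x : hadd hzero x = x.
Proof. by case: x => [[a b] c]; rewrite /hadd /=; congr (_, _, _); ring. Qed.

Lemma hadd0r x : hadd x hzero = x.
Proof. by case: x => [[a b] c]; rewrite /hadd /=; congr (_, _, _); ring. Qed.

Lemma haddNl x : hadd (hopp x) x = hzero.
Proof. by case: x => [[a b] c]; rewrite /hadd /=; congr (_, _, _); ring. Qed.

Lemma haddNr x : hadd x (hopp x) = hzero.
Proof. by case: x => [[a b] c]; rewrite /hadd /=; congr (_, _, _); ring. Qed.

Lemma hadd_idem x : hadd x x = x -> x = hzero.
Proof. by move=> xx; rewrite -(haddNl x) -{3}xx haddA haddNl hadd0l. Qed.

Lemma hmuln_proj x n :
  (hmuln x n).1.1 = n%:R * x.1.1 /\ (hmuln x n).1.2 = n%:R * x.1.2.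
Proof.
elim: n => [|n [IH1 IH2]] /=; first by rewrite !mul0r.
by rewrite IH1 IH2 !mulrSr !mulrDl !mul1r.
Qed.

Lemma hmuln_fst0 x n : x.1.1 = 0 -> hmuln x n = (0, n%:R * x.1.2, n%:R * x.2).
Proof.
move=> x0; elim: n => [|n IH] /=; first by rewrite !mul0r.
by rewrite IH /hadd /= x0 !mulrSr; congr (_, _, _); ring.
Qed.

Lemma hcentralE z : hcentral z <-> z.1.1 = 0 /\ z.1.2 = 0.
Proof.
split=> [cz | [z1 z2] v]; last first.
  by case: z z1 z2 v => [[a b] c] /= -> -> [[a1 b1] c1]; rewrite /hadd /=; congr (_, _, _); ring.
have /= := congr1 snd (cz (1, 0, 0)); have /= := congr1 snd (cz (0, 1, 0)).
rewrite !mulr0 !mul0r !mulr1 mul1r !addr0 !add0r => e2 e1.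
split; apply: (addrI z.2); rewrite addr0; [exact: e2 | exact: esym e1].
Qed.


Definition hone : heis := (1, 0, 0).

Lemma hmuln_hone n : hmuln hone n = (n%:R, 0, 0).
Proof. by elim: n => [|n IH] //=; rewrite IH /hadd /= mulrSr; congr (_, _, _); ring. Qed.

Hypothesis two_nz : 2 != 0 :> F.

Section Multiplication.
Variables (k : nat) (t : F).

Definition hmul (u v : heis) : heis :=
  (u.1.1 * v.1.1, u.1.2 * v.1.1 + u.1.1 ^+ k * v.1.2,
   u.1.1 * u.1.1 ^+ k * v.2 + u.1.1 * u.1.2 / 2 * v.1.1 ^+ 2
   + (u.2 - u.1.1 * u.1.2 / 2) * v.1.1 + t * u.1.1 * u.1.2 * v.1.2).

Lemma hmulA : t = 0 \/ k = 2%N -> associative hmul.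
Proof.
move=> kt [[a b] c] [[a1 b1] c1] [[a2 b2] c2]; rewrite /hmul /=.
by case: kt => [->|->]; rewrite ?exprMn; congr (_, _, _); field.
Qed.

Lemma hmulDr x : {morph hmul x : y w / hadd y w}.
Proof.
move: x => [[a b] c] [[a1 b1] c1] [[a2 b2] c2].
by rewrite /hmul /hadd /=; congr (_, _, _); field.
Qed.

Lemma hmul1l x : hmul hone x = x.
Proof. by case: x => [[a b] c]; rewrite /hmul /= expr1n; congr (_, _, _); field. Qed.

Lemma hmul1r x : hmul x hone = x.
Proof. by case: x => [[a b] c]; rewrite /hmul /=; congr (_, _, _); field. Qed.

Lemma hmul_left_inverse x :
  x.1.1 != 0 -> exists2 y, y.1.1 != 0 & hmul y x = hone.
Proof.
case: x => [[a b] c] /= a0.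
pose a' := a^-1; pose b' := - a' ^+ k * b / a.
pose c' := - (a' * a' ^+ k * c + a' * b' / 2 * a ^+ 2 - a' * b' / 2 * a
              + t * a' * b' * b) / a.
exists (a', b', c'); first by rewrite /= invr_eq0.
by rewrite /hmul /= /hone /c' /b' /a'; congr (_, _, _); field; rewrite a0 ?two_nz.
Qed.

Lemma hmul_unitP x : t = 0 \/ k = 2%N ->
  (exists y, hmul x y = hone /\ hmul y x = hone) <-> x.1.1 != 0.
Proof.
move=> kt; split=> [[y [xy _]] | x0].
  have /= := congr1 (fun w => w.1.1) xy.
  by apply: contra_eqN => /eqP ->; rewrite mul0r eq_sym oner_eq0.
have [y y0 yx] := hmul_left_inverse x0.
have [z _ zy] := hmul_left_inverse y0.
have zx : z = x by rewrite -[z]hmul1r -yx hmulA // zy hmul1l.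
by exists y; rewrite -{1}zx.
Qed.

Definition hzero_symmetric := forall x, hmul hzero x = hzero.

Lemma hzero_symmetricP : hzero_symmetric <-> (0 < k)%N.
Proof.
split=> [z0 | k0 [[a b] c]].
  have /= := congr1 (fun w => w.1.2) (z0 (0, 1, 0)); rewrite /hmul /= expr0n.
  by rewrite mul0r add0r mulr1 lt0n; case: eqP => // _ /eqP; rewrite oner_eq0.
by rewrite /hmul /= expr0n eqn0Ngt k0 /=; congr (_, _, _); ring.
Qed.

Definition cyclic_orbit :=
  exists2 w, ~ hcentral w & forall y, exists n, hmul y w = hmuln w n.

Lemma twisted_no_cyclic_orbit : t != 0 -> ~ cyclic_orbit.
Proof.
move=> t0 [[[a b] c] ncw orbit]; have [n e] := orbit (1, 1, 0).
have [/esym e1 /esym e2] := hmuln_proj (a, b, c) n.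
rewrite -e /hmul /= expr1n !mul1r in e1 e2.
have b0 : a = 0 -> b != 0.
  by move=> a0; apply/eqP => b0; apply: ncw; apply/hcentralE.
have n1 : n%:R = 1 :> F.
  have [a0 | a0] := eqVneq a 0; last by apply: (mulIf a0); rewrite e1 mul1r.
  by apply: (mulIf (b0 a0)); rewrite e2 a0 add0r mul1r.
have a0 : a = 0 by move: e2; rewrite n1 mul1r -{1}[b]add0r => /addIr.
move: e; rewrite (@hmuln_fst0 (a, b, c) n a0) n1 a0 /hmul /= => -[_ _].
rewrite expr1n expr0n /= !mul1r !(mulr0, mul0r, mulr1, addr0) -{2}[c]addr0 => /addrI /eqP.
by rewrite mulf_eq0 (negbTE t0) (negbTE (b0 a0)).
Qed.

End Multiplication.

Definition heis_nearring k t : nearring := NearRing heis hadd hzero hopp (hmul k t).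

Lemma heis_nearring_local k t : t = 0 \/ k = 2%N -> local_nearring (heis_nearring k t).
Proof.
move=> kt; split.
  split=> /= [||||]; [exact: haddA | | | exact: hmulA | exact: hmulDr].
    by move=> x; rewrite hadd0l hadd0r.
  by move=> x; rewrite haddNl haddNr.
exists hone; split; first by move=> x; rewrite /= hmul1l hmul1r.
have nonunitE x : ~ nr_invertible (R := heis_nearring k t) hone x <-> x.1.1 = 0.
  by rewrite /nr_invertible /= (hmul_unitP _ kt); split=> [/negP/negbNE/eqP | ->]; rewrite ?eqxx.
by split=> [|x y /nonunitE x0 /nonunitE y0|x /nonunitE x0]; apply/nonunitE;
  rewrite //= ?x0 ?y0 ?addr0 ?oppr0.
Qed.

End HeisenbergGroup.

Lemma nr_isomorphic_sym (R S : nearring) : nr_isomorphic R S -> nr_isomorphic S R.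
Proof.
case=> f [[g fK gK] [f_add f_mul]]; exists g; split; first by exists f.
by split=> x y; apply: (can_inj fK); rewrite ?f_add ?f_mul !gK.
Qed.


Section PrimeField.
Variable p : nat.
Hypotheses (p_pr : prime p) (p_gt2 : (2 < p)%N).
Local Notation F := 'F_p.
Local Open Scope ring_scope.

Lemma Fp_two_nz : 2 != 0 :> F.
Proof.
by apply/eqP => two0; have := congr1 (@nat_of_ord _) two0; rewrite val_Fp_nat // modn_small.
Qed.

Lemma Fp_expr_inj k k' : (k < p)%N -> (k' < p)%N -> (forall u : F, u ^+ k = u ^+ k') -> k = k'.
Proof.
wlog kk' : k k' / (k <= k')%N.
  move=> W kp k'p e; case/orP: (leq_total k k') => [le | /W ge]; first exact: W.
  by apply/esym/ge => // u; rewrite e.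
move=> _ k'p e; apply/eqP; rewrite eqn_leq kk' leqNgt; apply/negP => lt_kk'.
pose P : {poly F} := 'X^k' - 'X^k.
have sizeP : size P = k'.+1 by rewrite size_polyDl ?size_polyN !size_polyXn.
have P_nz : P != 0 by rewrite -size_poly_eq0 sizeP.
have rootsP : all (root P) (enum F).
  by apply/allP => u _; rewrite /root !hornerE e subrr.
have := max_poly_roots P_nz rootsP (enum_uniq F).
by rewrite -cardE card_Fp // sizeP ltnS leqNgt k'p.
Qed.

Lemma untwisted_cyclic_orbit k : cyclic_orbit k (0 : F).
Proof.
exists (0, 1, 0); first by move/hcentralE => [_ /eqP]; rewrite oner_eq0.
move=> y; exists (y.1.1 ^+ k); rewrite hmuln_fst0 // natr_Zp.
by rewrite /hmul /=; congr (_, _, _); ring.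
Qed.

Section Isomorphism.
Variables (k k' : nat) (t t' : F) (f : heis F -> heis F).
Hypotheses (f_bij : bijective f) (f_add : {morph f : x y / hadd x y}).
Hypothesis f_mul : forall x y, f (hmul k t x y) = hmul k' t' (f x) (f y).

Lemma iso_hzero : f (hzero F) = hzero F.
Proof. by apply: hadd_idem; rewrite -f_add hadd0l. Qed.

Lemma iso_hmuln x n : f (hmuln x n) = hmuln (f x) n.
Proof. by elim: n => [|n IH] /=; rewrite ?iso_hzero // f_add IH. Qed.

Lemma iso_hone : f (hone F) = hone F.
Proof.
have [g _ fK] := f_bij.
have := f_mul (hone F) (g (hone F)).
by rewrite (hmul1l Fp_two_nz) !fK (hmul1r Fp_two_nz).
Qed.

Lemma iso_hcentral z : hcentral (f z) <-> hcentral z.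
Proof.
have [g gK fK] := f_bij; split=> cz v.
  by apply: (can_inj gK); rewrite !f_add cz.
by rewrite -(fK v) -!f_add cz.
Qed.

Lemma iso_scalar (u : F) : f (u, 0, 0) = (u, 0, 0).
Proof. by rewrite -[in LHS](natr_Zp u) -hmuln_hone iso_hmuln iso_hone hmuln_hone natr_Zp. Qed.

Lemma iso_center : exists2 c : F, c != 0 & forall s, f (0, 0, s) = (0, 0, s * c).
Proof.
have : hcentral (f (0, 0, 1)) by apply/iso_hcentral/hcentralE.
move=> /hcentralE [f1 f2]; exists (f (0, 0, 1)).2.
  apply: contraTneq isT => c0; have : f (0, 0, 1) = f (hzero F).
    by rewrite iso_hzero; case: (f _) f1 f2 c0 => [[a b] c] /= -> -> ->.
  by move=> /(bij_inj f_bij) [] /eqP; rewrite oner_eq0.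
move=> s; have -> : (0, 0, s) = hmuln (0, 0, 1) s.
  by rewrite hmuln_fst0 //= mulr0 mulr1 natr_Zp.
by rewrite iso_hmuln (hmuln_fst0 _ f1) f2 mulr0 natr_Zp.
Qed.

Lemma iso_hzero_symmetric : hzero_symmetric k t -> hzero_symmetric k' t'.
Proof.
have [g _ fK] := f_bij.
by move=> z0 x; rewrite -(fK x) -iso_hzero -f_mul z0.
Qed.

Lemma iso_expr (u : F) : u ^+ k.+1 = u ^+ k'.+1.
Proof.
have [c c_nz fc] := iso_center.
have hmul_center l s (v : F) : hmul l s (u, 0, 0) (0, 0, v) = (0, 0, u ^+ l.+1 * v).
  by rewrite /hmul /=; congr (_, _, _); rewrite ?exprS; ring.
have := congr1 f (hmul_center k t 1); rewrite f_mul iso_scalar !fc mul1r.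
by rewrite hmul_center mulr1 => e; have /= /(mulIf c_nz) -> := congr1 snd e.
Qed.

Lemma iso_cyclic_orbit : cyclic_orbit k t -> cyclic_orbit k' t'.
Proof.
have [g _ fK] := f_bij.
move=> [w ncw orbit]; exists (f w); first by rewrite iso_hcentral.
by move=> y; have [n e] := orbit (g y); exists n; rewrite -iso_hmuln -e f_mul fK.
Qed.

End Isomorphism.

Lemma heis_nearring_iso_exponent k k' (t t' : F) : (k < p)%N -> (k' < p)%N ->
  nr_isomorphic (heis_nearring k t) (heis_nearring k' t') -> k = k'.
Proof.
move=> kp k'p iso; have [f [f_bij [f_add f_mul]]] := iso.
have [g [g_bij [g_add g_mul]]] := nr_isomorphic_sym iso.
have k_pos : (0 < k)%N = (0 < k')%N.
  apply/idP/idP => [/(hzero_symmetricP k t) | /(hzero_symmetricP k' t')] zs.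
    exact/(hzero_symmetricP k' t')/(iso_hzero_symmetric f_bij f_add f_mul zs).
  exact/(hzero_symmetricP k t)/(iso_hzero_symmetric g_bij g_add g_mul zs).
(* [iso_expr] alone cannot tell k = 0 from k = p - 1. *)
apply: (Fp_expr_inj kp k'p) => u; have [-> | u_nz] := eqVneq u 0.
  by rewrite !expr0n !eqn0Ngt k_pos.
by apply: (mulfI u_nz); rewrite -!exprS (iso_expr f_bij f_add f_mul).
Qed.

Lemma heis_nearring_iso_untwisted k k' (t t' : F) :
  nr_isomorphic (heis_nearring k t) (heis_nearring k' t') -> t = 0 -> t' = 0.
Proof.
move=> [f [f_bij [f_add f_mul]]] t0; have [// | t'_nz] := eqVneq t' 0.
case: (twisted_no_cyclic_orbit (k := k') t'_nz); apply: (iso_cyclic_orbit f_bij f_add f_mul).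
by rewrite t0; apply: untwisted_cyclic_orbit.
Qed.

Definition heis_family (i : 'I_p.+1) : nearring :=
  if (i < p)%N then heis_nearring i (0 : F) else heis_nearring 2 (1 : F).

Lemma heis_family_local i : local_nearring (heis_family i).
Proof.
by rewrite /heis_family; case: ifP => _; apply: (heis_nearring_local Fp_two_nz); [left | right].
Qed.

Lemma heis_family_noniso i j : i != j -> ~ nr_isomorphic (heis_family i) (heis_family j).
Proof.
rewrite /heis_family => /eqP ij; case: (ltnP i p) => ip; case: (ltnP j p) => jp iso.
- exact/ij/val_inj/(heis_nearring_iso_exponent ip jp iso).
- by have /eqP := heis_nearring_iso_untwisted iso erefl; rewrite oner_eq0.
- by have /eqP := heis_nearring_iso_untwisted (nr_isomorphic_sym iso) erefl; rewrite oner_eq0.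
- have le_p (l : 'I_p.+1) : (l <= p)%N by rewrite -ltnS.
  by apply/ij/val_inj/anti_leq; rewrite (leq_trans (le_p i) jp) (leq_trans (le_p j) ip).
Qed.

End PrimeField.

Section ClassTwoNormalForm.
Variables (gT : finGroupType) (x y : gT).
Local Open Scope group_scope.
Local Notation z := [~ x, y].
Hypotheses (cxz : commute x z) (cyz : commute y z).

Lemma mulg_normal_form (a b c a' b' c' : nat) :
  (y ^+ b * x ^+ a * z ^+ c) * (y ^+ b' * x ^+ a' * z ^+ c') =
  y ^+ (b + b') * x ^+ (a + a') * z ^+ (c + c' + a * b').
Proof.
have mulg_swap (u v w : gT) : commute v w -> u * v * w = u * w * v.
  by move=> cvw; rewrite -!mulgA cvw.
have czx n m : commute (z ^+ n) (x ^+ m) by apply/commuteX2/commute_sym.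
have czy n m : commute (z ^+ n) (y ^+ m) by apply/commuteX2/commute_sym.
have xy_swap : x ^+ a * y ^+ b' = y ^+ b' * x ^+ a * z ^+ (a * b').
  by rewrite commgC commXXg.
rewrite !mulgA (mulg_swap _ _ _ (czy _ _)) (mulg_swap _ _ _ (czx _ _)).
rewrite -(mulgA (y ^+ b)) xy_swap !mulgA (mulg_swap _ _ _ (czx _ _)).
rewrite -(expgnDr y) -(mulgA _ (x ^+ a)) -(expgnDr x) -!mulgA; congr (_ * (_ * _)).
by rewrite -!expgnDr addnC.
Qed.

End ClassTwoNormalForm.

Section NonMetacyclicGroup.
Variables (p : nat) (gT : finGroupType).
Hypotheses (p_pr : prime p) (oG : #|[set: gT]| = p ^ 3).
Hypotheses (G_nab : ~~ abelian [set: gT]) (G_nmc : ~~ metacyclic [set: gT]).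
Local Notation G := [set: gT].
Local Open Scope group_scope.

Let pG : p.-group G.
Proof. by rewrite /pgroup oG pnatX pnat_id. Qed.

Lemma expg_prime_eq1 (x : gT) : x ^+ p = 1.
Proof.
have : (#[x] %| p ^ 3)%N by rewrite -oG order_dvdG ?inE.
case/(dvdn_pfactor _ _ p_pr) => m; rewrite leq_eqVlt ltnS leq_eqVlt ltnS.
case/or3P => [/eqP m3 | /eqP m2 | m_le1] ox.
- case/negP: G_nab; apply/cyclic_abelian/cyclicP; exists x.
  by apply/eqP; rewrite eq_sym eqEcard subsetT -orderE ox oG m3 leqnn.
- have iG : #|G : <[x]>| = p.
    by rewrite -divgS ?subsetT // oG -orderE ox m2 (expnS p 2) mulnK ?expn_gt0 ?prime_gt0.
  have nsG : <[x]> <| G.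
    by apply: p_maximal_normal pG _; apply: p_index_maximal; rewrite ?subsetT ?iG.
  case/negP: G_nmc; apply/metacyclicP; exists <[x]>%G; split=> //; first exact: cycle_cyclic.
  by apply: prime_cyclic; rewrite card_quotient ?normal_norm // iG.
- by apply/eqP; rewrite -order_dvdn ox -{2}(expn1 p) dvdn_exp2l.
Qed.

Lemma prime_odd : odd p.
Proof.
case: (even_prime p_pr) => // p2; case/negP: G_nab.
apply/(abelem_abelian (p := 2))/exponent2_abelem/exponentP => x _.
by rewrite -p2 expg_prime_eq1.
Qed.

Lemma heis_morph_bijective (f : heis 'F_p -> gT) :
  {morph f : u v / hadd u v >-> u * v} -> (exists u v, ~ commute (f u) (f v)) ->
  bijective f.
Proof.
move=> fM [u [v ncuv]].
have f0 : f (hzero _) = 1 by apply: (mulgI (f (hzero _))); rewrite -fM hadd0l mulg1.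
have S_group : group_set (f @: setT).
  apply/group_setP; split; first by apply/imsetP; exists (hzero _).
  by move=> _ _ /imsetP [u' _ ->] /imsetP [v' _ ->]; apply/imsetP; exists (hadd u' v'); rewrite ?fM.
pose S := Group S_group.
have S_nab : ~~ abelian S.
  by apply/negP => /centsP cS; apply/ncuv/cS; apply: imset_f.
have pS : p.-group S := pgroupS (subsetT S) pG.
have S_full : #|S| = (p ^ 3)%N.
  apply/eqP; rewrite eqn_leq -{1}oG subset_leq_card ?subsetT //=.
  rewrite (card_pgroup pS) leq_exp2l ?prime_gt1 // ltnNge.
  by apply: contra S_nab; apply: p2group_abelian.
have p3 : (p ^ 3 = p * p * p)%N by rewrite !expnS expn0 muln1 mulnA.
have f_inj : injective f.
  have /imset_injP f_inj : #|f @: [set: heis 'F_p]| == #|[set: heis 'F_p]|.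
    by rewrite S_full cardsT !card_prod !card_Fp // p3.
  by move=> u1 v1; apply: f_inj; rewrite inE.
by apply: inj_card_bij f_inj _; rewrite !card_prod !card_Fp // -cardsT oG p3.
Qed.

Lemma heis_group_iso :
  exists f : heis 'F_p -> gT, bijective f /\ {morph f : u v / hadd u v >-> u * v}.
Proof.
have [x _] := subsetPn G_nab; rewrite -sub_cent1 => /subsetPn [y _ nxy].
pose z := [~ x, y].
have zZ : z \in 'Z(G).
  have [[_ <-] _] : extraspecial G by apply: (p3group_extraspecial pG G_nab); rewrite oG pfactorK.
  by rewrite derg1 mem_commg ?inE.
have [cxz cyz] : commute x z /\ commute y z.
  by move: zZ => /setIP [_ /centP cz]; split; apply/commute_sym/cz; rewrite inE.
have expq (g : gT) : g ^+ (Zp_trunc (pdiv p)).+2 = 1 by rewrite (Fp_cast p_pr) expg_prime_eq1.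
pose f (u : heis 'F_p) := y ^+ u.1.2 * x ^+ u.1.1 * z ^+ u.2.
have fM : {morph f : u v / hadd u v >-> u * v}.
  move=> u v; rewrite /f mulg_normal_form // /hadd /= !(expg_mod _ (expq _)).
  by rewrite (expgnDr z) !(expg_mod _ (expq _)) -expgnDr.
exists f; split=> //; apply: heis_morph_bijective fM _.
exists (1, 0, 0)%R, (0, 1, 0)%R; rewrite /f /= !expg0 !mulg1 mul1g !modn_small // !expg1.
by move=> cxy; case/negP: nxy; apply/cent1P.
Qed.

End NonMetacyclicGroup.

Theorem theorem2 (p : nat) (gT : finGroupType) :
  prime p -> #|[set: gT]| = p ^ 3 ->
  ~~ abelian [set: gT] -> ~~ metacyclic [set: gT] ->
  exists N : 'I_p.+1 -> nearring,
    (forall i, local_nearring (N i) /\ additive_group_isomorphic (N i) gT) /\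
    (forall i j, i != j -> ~ nr_isomorphic (N i) (N j)).
Proof.
move=> p_pr oG G_nab G_nmc.
have p_gt2 : (2 < p)%N := odd_prime_gt2 (prime_odd p_pr oG G_nab G_nmc) p_pr.
have [f [f_bij f_add]] := heis_group_iso p_pr oG G_nab G_nmc.
exists (@heis_family p); split=> [i | i j]; last exact: heis_family_noniso.
split; first exact: heis_family_local.
by rewrite /heis_family; case: ifP; exists f.
Qed.
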